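(* Let $N>2$ be an odd positive integer with smallest prime factor $p$, and let $K\ge N$ be an integer. Let $a_2,a_1\in\mathbb{Z}_N$ with $\gcd(a_2,N)=1$, and let $f:\mathbb{Z}_N\to\mathbb{Z}_K$ be defined by $f(x)=\phi(a_2x^2+a_1x)$, where $\phi:\mathbb{Z}_N\to\mathbb{Z}_K$ sends the class of $y\in\{0,\dots,N-1\}$ to the class of $y$ modulo $K$. For $0\le k<N$ let $\mathbf{a}_k=(a_k(0),\dots,a_k(K-1))$ with $a_k(t)=\omega_K^{tf(k)}$. Let $\mathbf{h}_0,\dots,\mathbf{h}_{N-1}$ be unimodular complex sequences of length $N$ such that for all $0\le i\ne j<N$ and all $0\le v<N$, $$\Big|\sum_{n=0}^{N-1}h_i(n)h_j^*(n)\Big|\le 1,\qquad \Big|\sum_{n=0}^{N-1}h_i(n)h_j^*(n)\omega_N^{nv}\Big|<N.$$ For $0\le i<N$ define $\mathbf{s}_i$ of length $NK$ by $s_i(tN+k)=h_i(k)a_k(t)$ ($0\le t<K$, $0\le k<N$) and let $\mathcal{S}=\{\mathbf{s}_0,\dots,\mathbf{s}_{N-1}\}$. Then $\mathcal{S}$ is a periodic $(N,NK,\Pi,K)$-LAZ sequence set, where (1) $\Pi=(-p,p)\times(-N,N)$ if $K=N$; (2) $\Pi=(-p,p)\times(-K+N-1,K-N+1)$ if $N<K<2N-1$; (3) $\Pi=(-p,p)\times(-K,K)$ if $K\ge 2N-1$.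
   Context: $\omega_L=e^{2\pi\sqrt{-1}/L}$, $z^*$ is complex conjugation, unimodular means all entries have modulus 1. For sequences $\mathbf{a},\mathbf{b}$ of length $L$, the periodic cross-ambiguity function is $AF_{\mathbf{a},\mathbf{b}}(\tau,v)=\sum_{t=0}^{L-1}a(t)b^*(\langle t+\tau\rangle_L)\omega_L^{vt}$ ($\langle\cdot\rangle_L$ = reduction mod $L$), $AF_{\mathbf{a}}=AF_{\mathbf{a},\mathbf{a}}$. A set of $M$ sequences of length $L$ is an $(M,L,\Pi,\theta)$-LAZ periodic sequence set if $|AF_{\mathbf{a}}(\tau,v)|\le\theta$ for all sequences $\mathbf{a}$ in the set and all integer $(0,0)\ne(\tau,v)\in\Pi$, and $|AF_{\mathbf{a},\mathbf{b}}(\tau,v)|\le\theta$ for all distinct $\mathbf{a},\mathbf{b}$ in the set and all integer $(\tau,v)\in\Pi$. *)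

From HB Require Import structures.
From mathcomp Require Import all_boot all_order all_algebra.
From mathcomp Require Import complex.
From mathcomp Require Import reals trigo.
Set Implicit Arguments. Unset Strict Implicit. Unset Printing Implicit Defensive.
Import Order.TTheory GRing.Theory Num.Theory.
Local Open Scope ring_scope.
Local Open Scope complex_scope.

Definition expi (R : realType) (x : R) : R[i] := (cos x +i* sin x)%C.

Definition omg (R : realType) (L : nat) (m : int) : R[i] :=
  expi (2 * pi * (m%:~R) / (L%:R)).

Definition AF (R : realType) (L : nat) (a b : nat -> R[i]) (tau v : int) : R[i] :=
  \sum_(t < L) a t * (b (absz ((t%:Z + tau) %% L%:Z)%Z))^* * omg R L (v * t%:Z).

Definition LAZ (R : realType) (M L : nat) (S : nat -> nat -> R[i])
  (Pi : int -> int -> Prop) (theta : R) : Prop :=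
  (forall i, (i < M)%N -> forall tau v, Pi tau v -> (tau, v) <> (0, 0) ->
      `|AF L (S i) (S i) tau v| <= theta%:C) /\
  (forall i j, (i < M)%N -> (j < M)%N -> i <> j -> forall tau v, Pi tau v ->
      `|AF L (S i) (S j) tau v| <= theta%:C).

(* f(x) = phi(a2 x^2 + a1 x) : representative in {0..N-1} reduced mod K *)
Definition fquad (N K a2 a1 x : nat) : nat := ((a2 * x ^ 2 + a1 * x) %% N) %% K.

Definition aseq (R : realType) (N K a2 a1 k : nat) (t : nat) : R[i] :=
  omg R K (t * fquad N K a2 a1 k)%N%:Z.

Definition sseq (R : realType) (N K a2 a1 : nat) (h : nat -> nat -> R[i])
  (i m : nat) : R[i] :=
  h i (m %% N)%N * aseq R N K a2 a1 (m %% N)%N (m %/ N)%N.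

Definition PiReg (N K : nat) (tau v : int) : Prop :=
  `|tau| < (pdiv N)%:Z /\
  (if K == N then `|v| < N%:Z
   else if (K < (2 * N).-1)%N then `|v| < (K - N + 1)%N%:Z
   else `|v| < K%:Z).

(* The ambiguity function of s_i and s_j at (tau, v) splits, along m = t N + k,
   into N geometric sums over t: the k-th one has ratio omega_K^(e_k) with
   e_k = f(k) - f(k + tau) + v, hence equals K if K | e_k and 0 otherwise, and its
   coefficient has modulus 1.  At (0, 0) this is K times the correlation of h_i
   and h_j.  Elsewhere at most one e_k is divisible by K: if tau = 0 all e_k equal
   v with 0 < |v| < K; if 0 < |tau| < p, the shape of Pi forces N | e_k1 - e_k2
   whenever K divides both, while e_k1 - e_k2 = 2 a2 tau (k2 - k1) mod N and
   2 a2 tau is a unit mod N, so k1 = k2. *)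

From HB Require Import structures.
From mathcomp Require Import all_boot all_order all_algebra.
From mathcomp Require Import complex.
From mathcomp Require Import reals trigo.
From mathcomp Require Import ring lra zify.
Import Order.TTheory GRing.Theory Num.Theory.
Local Open Scope ring_scope.

Section RootsOfUnity.
Variable R : realType.

Lemma expiD (x y : R) : expi (x + y) = expi x * expi y.
Proof. by rewrite /expi cosD sinD /=; congr Complex; ring. Qed.

Lemma norm_expi (x : R) : `|expi x| = 1.
Proof. by rewrite normc_def /= cos2Dsin2 sqrtr1. Qed.

Lemma conj_expi (x : R) : (expi x)^* = expi (- x).
Proof. by rewrite /expi cosN sinN. Qed.

Lemma expi_2pi_int (q : int) : expi (2 * pi * q%:~R : R) = 1.
Proof.
have expi_2pi_nat (n : nat) : expi (2 * pi * n%:R : R) = 1.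
  rewrite /expi mulr_natl mulr_natr -[_ *+ n]add0r.
  by rewrite (periodicn (@cosD2pi R)) (periodicn (@sinD2pi R)) cos0 sin0.
case: q => n; first exact: expi_2pi_nat.
by rewrite NegzE intrN mulrN -conj_expi expi_2pi_nat conjC1.
Qed.

Lemma expi_eq1_lt2pi (x : R) : 0 < x < 2 * pi -> expi x != 1.
Proof.
move=> /andP[x_gt0 x_lt2pi]; apply/eqP => /(congr1 (@complex.Re R)) /= cos_x.
have sin_half_gt0 : 0 < sin (x / 2).
  by apply: sin_gt0_pi; rewrite divr_gt0 //= ltr_pdivrMr // mulrC.
have : cos ((x / 2) *+ 2) = 1 by rewrite -mulr_natr divfK ?pnatr_eq0.
rewrite cos_mulr2n cos2sin2 => double_angle.
have : sin (x / 2) ^+ 2 = 0 by lra.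
by move/eqP; rewrite sqrf_eq0 gt_eqF.
Qed.

Lemma omgD L (m n : int) : omg R L (m + n) = omg R L m * omg R L n.
Proof. by rewrite /omg -expiD intrD !mulrDr mulrDl. Qed.

Lemma omg0 L : omg R L 0 = 1.
Proof. by rewrite /omg mulr0 mul0r /expi cos0 sin0. Qed.

Lemma omgX L (n : nat) (m : int) : omg R L (n%:Z * m) = omg R L m ^+ n.
Proof.
elim: n => [|n IH]; first by rewrite mul0r omg0.
by rewrite intS mulrDl mul1r omgD IH exprS.
Qed.

Lemma norm_omg L m : `|omg R L m| = 1.
Proof. exact: norm_expi. Qed.

Lemma conj_omg L m : (omg R L m)^* = omg R L (- m).
Proof. by rewrite /omg conj_expi intrN mulrN mulNr. Qed.

Lemma omg_scale N K (m : int) : (0 < N)%N ->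
  omg R (N * K) (N%:Z * m) = omg R K m.
Proof.
move=> N_gt0; rewrite /omg intrM natrM -pmulrn; congr expi.
have N_neq0 : (N%:R : R) != 0 by rewrite pnatr_eq0 -lt0n.
by rewrite invfM -!mulrA; congr (_ * (_ * _)); rewrite mulrCA mulVKf.
Qed.

Section Period.
Variables (L : nat) (L_gt0 : (0 < L)%N).

Lemma omg_full_turn (q : int) : omg R L (q * L%:Z) = 1.
Proof.
have L_neq0 : (L%:R : R) != 0 by rewrite pnatr_eq0 -lt0n.
by rewrite /omg intrM -pmulrn mulrA mulfK // expi_2pi_int.
Qed.

Lemma omg_modz (m : int) : omg R L (m %% L)%Z = omg R L m.
Proof. by rewrite [in RHS](divz_eq m L) [in RHS]omgD omg_full_turn mul1r. Qed.

Lemma omg_eq1 (m : int) : (omg R L m == 1) = (L%:Z %| m)%Z.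
Proof.
apply/idP/idP => [|/dvdzP[q ->]]; last by rewrite omg_full_turn.
rewrite -omg_modz; set r := (m %% L)%Z.
have r_ge0 : 0 <= r by rewrite modz_ge0 // -lt0n.
have r_ltL : r < L%:Z by rewrite ltz_pmod.
apply: contraLR => /dvdz_mod0P/eqP r_neq0; apply: expi_eq1_lt2pi.
have r_gt0 : (0 : R) < r%:~R by rewrite ltr0z lt_def r_neq0.
have L_gt0R : (0 : R) < L%:R by rewrite ltr0n.
rewrite divr_gt0 ?mulr_gt0 ?pi_gt0 //= ltr_pdivrMr // ltr_pM2l ?mulr_gt0 ?pi_gt0 //.
by rewrite -[L%:R]/((L%:Z)%:~R) ltr_int.
Qed.

Lemma eq_omg_mod (m n : int) : (m = n %[mod L])%Z -> omg R L m = omg R L n.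
Proof. by move=> mn; rewrite -omg_modz mn omg_modz. Qed.

Definition omg_sum (m : int) : R[i] := \sum_(t < L) omg R L (t%:Z * m).

Lemma omg_sumE (m : int) : omg_sum m = if (L%:Z %| m)%Z then L%:R else 0.
Proof.
have -> : omg_sum m = \sum_(t < L) omg R L m ^+ t by apply: eq_bigr => t _; rewrite omgX.
case: ifPn => [Lm | /negPf Lm].
  have /eqP-> : omg R L m == 1 by rewrite omg_eq1.
  by rewrite (eq_bigr (fun=> 1)) ?sumr_const ?card_ord // => t _; rewrite expr1n.
have := subrX1 (omg R L m) L; rewrite -omgX; have /eqP -> : omg R L (L%:Z * m) == 1.
  by rewrite omg_eq1 dvdz_mulr.
by rewrite subrr => /esym/eqP; rewrite mulf_eq0 subr_eq0 omg_eq1 Lm => /eqP.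
Qed.

End Period.
End RootsOfUnity.

Lemma sum_ord_mul (V : nmodType) N K (F : nat -> V) :
  \sum_(m < N * K) F m = \sum_(k < N) \sum_(t < K) F (t * N + k)%N.
Proof.
rewrite exchange_big /= mulnC -(big_mkord xpredT) big_nat_mul big_mkord.
apply: eq_bigr => t _.
rewrite -{1}[(t * N)%N]add0n big_addn mulSn addnK big_mkord.
by apply: eq_bigr => k _; rewrite addnC.
Qed.

Definition cshift (N : nat) (tau : int) (k : nat) : nat := absz ((k%:Z + tau) %% N%:Z)%Z.
Definition carry (N : nat) (tau : int) (k : nat) : int := ((k%:Z + tau) %/ N%:Z)%Z.

Section Shift.
Variables (N : nat) (N_gt0 : (0 < N)%N).

Lemma cshiftE tau k : (cshift N tau k)%:Z = ((k%:Z + tau) %% N%:Z)%Z.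
Proof. by rewrite /cshift gez0_abs // modz_ge0 // -lt0n. Qed.

Lemma cshift_lt tau k : (cshift N tau k < N)%N.
Proof. by rewrite -ltz_nat cshiftE ltz_pmod. Qed.

Lemma cshift_carry tau k : k%:Z + tau = carry N tau k * N%:Z + (cshift N tau k)%:Z.
Proof. by rewrite cshiftE; apply: divz_eq. Qed.

Lemma cshift0 k : (k < N)%N -> cshift N 0 k = k.
Proof. by move=> k_lt; apply/eqP; rewrite -eqz_nat cshiftE addr0 modz_small ?ltz_nat. Qed.

Lemma carry0 k : (k < N)%N -> carry N 0 k = 0.
Proof. by move=> k_lt; rewrite /carry addr0 divz_small ?ltz_nat. Qed.

End Shift.

Section Decomposition.
Variables (R : realType) (N K a2 a1 : nat) (h : nat -> nat -> R[i]).
Hypotheses (N_gt0 : (0 < N)%N) (K_gt0 : (0 < K)%N).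

Local Notation s := (sseq N K a2 a1 h).

Definition fq (k : nat) : int := (fquad N K a2 a1 k)%:Z.

Definition freq (tau v : int) (k : nat) : int := fq k - fq (cshift N tau k) + v.

Definition ambig_coef (i j : nat) (tau v : int) (k : nat) : R[i] :=
  h i k * (h j (cshift N tau k))^* *
  omg R K (- (carry N tau k * fq (cshift N tau k))) * omg R (N * K) (v * k%:Z).

Lemma sseq_at i t k : (k < N)%N -> s i (t * N + k) = h i k * omg R K (t%:Z * fq k).
Proof.
move=> k_lt; rewrite /sseq /aseq modnMDl modn_small // divnMDl // divn_small //.
by rewrite addn0 PoszM.
Qed.

Lemma sseq_shift j t k tau :
  s j (absz (((t * N + k)%N%:Z + tau) %% (N * K)%N%:Z)%Z) =
  h j (cshift N tau k) * omg R K ((t%:Z + carry N tau k) * fq (cshift N tau k)).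
Proof.
set q := ((((t * N + k)%N%:Z + tau) %/ (N * K)%N%:Z))%Z.
set M := (((t * N + k)%N%:Z + tau) %% (N * K)%N%:Z)%Z.
have M_ge0 : 0 <= M by rewrite modz_ge0 // -lt0n muln_gt0 N_gt0.
have ME : M = (t%:Z + carry N tau k - q * K%:Z) * N%:Z + (cshift N tau k)%:Z.
  rewrite /M /modz -/q PoszD !PoszM -[_ + k%:Z + tau]addrA (cshift_carry _ N_gt0 tau k); ring.
have M_mod : (absz M %% N)%N = cshift N tau k.
  apply/eqP; rewrite -eqz_nat -modz_nat gez0_abs // ME modzMDl modz_small //.
  by rewrite lez_nat ltz_nat (cshift_lt _ N_gt0).
have M_div : ((absz M %/ N)%N)%:Z = t%:Z + carry N tau k - q * K%:Z.
  rewrite -divz_nat gez0_abs // ME divzMDl -?lt0n // divz_small ?addr0 //.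
  by rewrite lez_nat ltz_nat (cshift_lt _ N_gt0).
rewrite /sseq /aseq M_mod PoszM M_div -/(fq _); congr (_ * _); apply: eq_omg_mod => //.
set x := t%:Z + carry N tau k; set f := fq (cshift N tau k).
by rewrite (_ : (x - q * K%:Z) * f = - (q * f) * K%:Z + x * f) ?modzMDl //; ring.
Qed.

Lemma AF_sseq_term i j tau v t k : (k < N)%N ->
  s i (t * N + k) * (s j (absz (((t * N + k)%N%:Z + tau) %% (N * K)%N%:Z)%Z))^* *
  omg R (N * K) (v * (t * N + k)%N%:Z)
  = ambig_coef i j tau v k * omg R K (t%:Z * freq tau v k).
Proof.
move=> k_lt; rewrite sseq_at // sseq_shift rmorphM /= conj_omg.
rewrite (_ : v * _ = N%:Z * (v * t%:Z) + v * k%:Z); last by rewrite PoszD PoszM; ring.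
rewrite omgD omg_scale // /ambig_coef /freq.
set f := fq k; set f' := fq (cshift N tau k); set c := carry N tau k.
have phase : omg R K (t%:Z * f) * omg R K (- ((t%:Z + c) * f')) * omg R K (v * t%:Z)
    = omg R K (- (c * f')) * omg R K (t%:Z * (f - f' + v)).
  by rewrite -!omgD; congr omg; ring.
transitivity (h i k * (h j (cshift N tau k))^* * omg R (N * K) (v * k%:Z) *
  (omg R K (t%:Z * f) * omg R K (- ((t%:Z + c) * f')) * omg R K (v * t%:Z))); first by ring.
by rewrite phase; ring.
Qed.

Lemma AF_sseqE i j tau v :
  AF (N * K) (s i) (s j) tau v =
  \sum_(k < N) ambig_coef i j tau v k * omg_sum R K (freq tau v k).
Proof.
rewrite /AF (sum_ord_mul _ N K (fun m => s i m *
  (s j (absz ((m%:Z + tau) %% (N * K)%N%:Z)%Z))^* * omg R (N * K) (v * m%:Z))).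
apply: eq_bigr => k _; rewrite /omg_sum mulr_sumr; apply: eq_bigr => t _.
exact: AF_sseq_term.
Qed.

Lemma AF_sseq_origin i j :
  AF (N * K) (s i) (s j) 0 0 = K%:R * \sum_(k < N) h i k * (h j k)^*.
Proof.
rewrite AF_sseqE mulr_sumr; apply: eq_bigr => k _.
rewrite /ambig_coef /freq cshift0 // carry0 // subrr add0r omg_sumE // dvdz0.
by rewrite !mul0r oppr0 !omg0 !mulr1 mulrC.
Qed.

Hypothesis h_unimodular : forall i n, (i < N)%N -> (n < N)%N -> `|h i n| = 1.

Lemma norm_ambig_coef i j tau v k : (i < N)%N -> (j < N)%N -> (k < N)%N ->
  `|ambig_coef i j tau v k| = 1.
Proof.
move=> i_lt j_lt k_lt.
by rewrite /ambig_coef !normrM norm_conjC !norm_omg !h_unimodular ?cshift_lt // !mulr1.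
Qed.

Lemma norm_AF_sseq_le i j tau v : (i < N)%N -> (j < N)%N ->
  (forall k1 k2 : 'I_N, (K%:Z %| freq tau v k1)%Z ->
     (K%:Z %| freq tau v k2)%Z -> k1 = k2) ->
  `|AF (N * K) (s i) (s j) tau v| <= K%:R.
Proof.
move=> i_lt j_lt freq_inj; rewrite AF_sseqE //.
under eq_bigr => k _ do rewrite omg_sumE //.
case: (pickP (fun k : 'I_N => (K%:Z %| freq tau v k)%Z)) => [k0 dvd_k0 | no_dvd].
  rewrite (bigD1 k0) //= dvd_k0 big1 ?addr0 => [|k k_neq].
    by rewrite normrM norm_ambig_coef // mul1r normr_nat.
  by rewrite ifN ?mulr0 //; apply: contra k_neq => dvd_k; rewrite (freq_inj _ _ dvd_k dvd_k0).
by rewrite big1 ?normr0 // => k _; rewrite no_dvd mulr0.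
Qed.

End Decomposition.

Lemma dvdz_small_eq0 {d : nat} {x : int} : (d%:Z %| x)%Z -> `|x| < d%:Z -> x = 0.
Proof.
rewrite dvdzE -abszE ltz_nat => d_dvd x_lt; apply/eqP; rewrite -absz_eq0 -leqn0.
by apply: contraLR x_lt; rewrite -!ltnNge => /dvdn_leq/(_ d_dvd).
Qed.

Lemma coprime_lt_pdiv n t : (0 < t < pdiv n)%N -> coprime n t.
Proof.
case/andP=> t_gt0 t_lt; rewrite /coprime eqn_leq gcdn_gt0 t_gt0 orbT andbT leqNgt.
apply/negP => g_gt1.
have := leq_trans (pdiv_min_dvd g_gt1 (dvdn_gcdl n t)) (dvdn_leq t_gt0 (dvdn_gcdr n t)).
by rewrite leqNgt t_lt.
Qed.

Definition quadz (a2 a1 : nat) (x : int) : int := a2%:Z * x ^+ 2 + a1%:Z * x.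

Lemma dvdz_quadzB (d a2 a1 : nat) (x y : int) :
  (d%:Z %| x - y)%Z -> (d%:Z %| quadz a2 a1 x - quadz a2 a1 y)%Z.
Proof.
move=> dvd_xy; rewrite (_ : _ - _ = (x - y) * (a2%:Z * (x + y) + a1%:Z)).
  exact: dvdz_mulr.
by rewrite /quadz; ring.
Qed.

Section Uniqueness.
Variables (N K a2 a1 : nat).
Hypotheses (N_odd : odd N) (N_le_K : (N <= K)%N) (a2_coprime : coprime a2 N).

Let N_gt0 : (0 < N)%N. Proof. by case: N N_odd. Qed.

Local Notation fq := (fq N K a2 a1).
Local Notation freq := (freq N K a2 a1).
Local Notation quad := (quadz a2 a1).

Lemma fqE k : fq k = (quad k %% N)%Z.
Proof.
rewrite /fq /fquad modn_small; last by rewrite (leq_trans _ N_le_K) ?ltn_mod.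
by rewrite -modz_nat -mulnn /quadz expr2 PoszD !PoszM.
Qed.

Lemma fq_bounds k : 0 <= fq k < N%:Z.
Proof. by rewrite fqE modz_ge0 ?ltz_pmod // -lt0n. Qed.

Lemma dvdz_fq_quad k : (N%:Z %| fq k - quad k%:Z)%Z.
Proof. by rewrite -eqz_mod_dvd fqE modz_mod. Qed.

Lemma dvdz_cshift tau k : (N%:Z %| (cshift N tau k)%:Z - (k%:Z + tau))%Z.
Proof. by rewrite -eqz_mod_dvd cshiftE // modz_mod. Qed.

Lemma dvdz_freqB tau v k1 k2 :
  (N%:Z %| (freq tau v k1 - freq tau v k2) - 2 * a2%:Z * tau * (k2%:Z - k1%:Z))%Z.
Proof.
pose err k := (fq k - quad k%:Z) - (fq (cshift N tau k) - quad (cshift N tau k)%:Z)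
  - (quad (cshift N tau k)%:Z - quad (k%:Z + tau)).
have err_dvd k : (N%:Z %| err k)%Z.
  apply: rpredB; first exact: rpredB (dvdz_fq_quad _) (dvdz_fq_quad _).
  exact/dvdz_quadzB/dvdz_cshift.
rewrite (_ : freq tau v k1 - freq tau v k2 - _ = err k1 - err k2); first exact: rpredB.
by rewrite /err /freq /quadz; ring.
Qed.

Lemma PiReg_v_lt {tau v} : PiReg N K tau v -> `|v| < K%:Z.
Proof. by case=> _; case: eqP => [<- //|_]; case: ifP => _; lia. Qed.

Lemma fq_shift_lt tau k : `|fq k - fq (cshift N tau k)| < N%:Z.
Proof. by have := fq_bounds k; have := fq_bounds (cshift N tau k); lia. Qed.

Lemma dvdz_freqB_PiReg tau v k1 k2 : PiReg N K tau v ->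
  (K%:Z %| freq tau v k1)%Z -> (K%:Z %| freq tau v k2)%Z ->
  (N%:Z %| freq tau v k1 - freq tau v k2)%Z.
Proof.
move=> [_ v_lt].
have b1 := fq_shift_lt tau k1; have b2 := fq_shift_lt tau k2.
case: eqP v_lt => [K_eq_N | _] v_lt.
  have K_eqz : K%:Z = N%:Z by rewrite K_eq_N.
  by rewrite K_eqz; apply: rpredB.
case: ifP v_lt => [K_lt | K_ge] v_lt.
  have freq_lt k : `|fq k - fq (cshift N tau k)| < N%:Z -> `|freq tau v k| < K%:Z.
    by rewrite /freq; lia.
  move=> /dvdz_small_eq0/(_ (freq_lt k1 b1)) -> /dvdz_small_eq0/(_ (freq_lt k2 b2)) ->.
  by rewrite subrr dvdz0.
have freqB_lt : `|freq tau v k1 - freq tau v k2| < K%:Z by rewrite /freq; lia.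
by move=> dvd1 dvd2; rewrite (dvdz_small_eq0 (rpredB dvd1 dvd2) freqB_lt) dvdz0.
Qed.

Lemma freq_dvd_inj tau v : PiReg N K tau v -> (tau, v) != (0, 0) ->
  forall k1 k2 : 'I_N, (K%:Z %| freq tau v k1)%Z -> (K%:Z %| freq tau v k2)%Z -> k1 = k2.
Proof.
move=> Pi nz k1 k2 dvd1 dvd2; apply: val_inj.
have k_lt : `|k2%:Z - k1%:Z| < N%:Z by have := ltn_ord k1; have := ltn_ord k2; lia.
have [tau0 | tau_neq0] := eqVneq tau 0.
  move: dvd1 nz; rewrite tau0 /freq cshift0 ?ltn_ord // subrr add0r => dvd_v.
  by rewrite (dvdz_small_eq0 dvd_v (PiReg_v_lt Pi)) eqxx.
have N_tau : coprimez N%:Z (2 * a2%:Z * tau).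
  rewrite coprimezE !abszM /= !coprimeMr coprimen2 N_odd coprime_sym a2_coprime.
  by rewrite coprime_lt_pdiv // absz_gt0 tau_neq0 -ltz_nat abszE; case: Pi.
have := dvdz_freqB tau v k1 k2; rewrite rpredBl ?dvdz_freqB_PiReg //.
rewrite Gauss_dvdzr // => /dvdz_small_eq0/(_ k_lt)/eqP.
by rewrite subr_eq0 eqz_nat => /eqP.
Qed.

End Uniqueness.

Theorem corollary1 (R : realType) (N K a2 a1 : nat) (h : nat -> nat -> R[i]) :
  odd N -> (2 < N)%N -> (N <= K)%N ->
  (a2 < N)%N -> (a1 < N)%N -> coprime a2 N ->
  (forall i n, (i < N)%N -> (n < N)%N -> `|h i n| = 1) ->
  (forall i j, (i < N)%N -> (j < N)%N -> i <> j ->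
     `|\sum_(n < N) h i n * (h j n)^*| <= 1) ->
  (forall i j v, (i < N)%N -> (j < N)%N -> i <> j -> (v < N)%N ->
     `|\sum_(n < N) h i n * (h j n)^* * omg R N (n * v)%N%:Z| < N%:R) ->
  LAZ N (N * K) (sseq N K a2 a1 h) (PiReg N K) K%:R.
Proof.
move=> N_odd N_gt2 N_le_K _ _ a2_coprime h_unimodular h_corr _.
have N_gt0 : (0 < N)%N := ltnW (ltnW N_gt2).
have K_gt0 : (0 < K)%N := leq_trans N_gt0 N_le_K.
have AF_le i j tau v : (i < N)%N -> (j < N)%N -> PiReg N K tau v -> (tau, v) != (0, 0) ->
    `|AF (N * K) (sseq N K a2 a1 h i) (sseq N K a2 a1 h j) tau v| <= K%:R.
  by move=> i_lt j_lt Pi nz; apply: norm_AF_sseq_le => //; exact: freq_dvd_inj.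
split=> [i i_lt tau v Pi /eqP nz | i j i_lt j_lt i_neq_j tau v Pi]; rewrite rmorph_nat.
  exact: AF_le.
have [[-> ->] | nz] := eqVneq (tau, v) (0, 0); last exact: AF_le.
by rewrite AF_sseq_origin // normrM normr_nat ler_piMr ?h_corr.
Qed.
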